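(* Let $G=(V_G,E_G)$ be a finite graph whose automorphism group acts vertex-transitively on $V_G$. Then for every real vector $\vec J=(J_\alpha)_{\alpha\in V_G}$, the optimum of the graph semi-definite program for $H$ is at most $$-\Bigl(\sum_\alpha |J_\alpha|\Bigr)\,|V_G|^{-1/2}\sqrt{\vartheta(G)}.$$
   Context: Let $G=(V_G,E_G)$ be a finite graph; rows and columns of the matrices below are indexed by $V_G$. For a real vector $\vec J$, the ''graph semi-definite program for $H$'' is: minimize $(\vec J,v)=\sum_\alpha J_\alpha v_\alpha$ over real vectors $v$ and real symmetric matrices $M$, subject to: - $M_{\alpha,\alpha}=1$ for all $\alpha$; - $M_{\alpha,\beta}=0$ whenever $(\alpha,\beta)\in E_G$; - the block matrix $N=\begin{pmatrix}1 & v^T\\ v & M\end{pmatrix}$ is positive semi-definite. $\vartheta(G)$ denotes the Lovász theta function: the maximum of the sum of all entries of a real symmetric positive semi-definite matrix $B$ with $\mathrm{tr}\,B=1$ and $B_{\alpha,\beta}=0$ whenever $(\alpha,\beta)\in E_G$. *)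

From HB Require Import structures.
From mathcomp Require Import all_boot all_order all_algebra all_fingroup.
From mathcomp Require Import classical_sets reals.
Set Implicit Arguments. Unset Strict Implicit. Unset Printing Implicit Defensive.
Import Order.TTheory GRing.Theory Num.Theory.
Local Open Scope ring_scope.
Local Open Scope classical_set_scope.

Definition simple_graph {n : nat} (e : rel 'I_n) : Prop :=
  symmetric e /\ irreflexive e.

Definition graph_aut {n : nat} (e : rel 'I_n) (s : {perm 'I_n}) : Prop :=
  forall x y, e (s x) (s y) = e x y.

Definition vertex_transitive {n : nat} (e : rel 'I_n) : Prop :=
  forall x y : 'I_n, exists s : {perm 'I_n}, graph_aut e s /\ s x = y.

Definition psd {R : numDomainType} {m : nat} (A : 'M[R]_m) : Prop :=
  A^T = A /\ forall x : 'cV[R]_m, 0 <= (x^T *m A *m x) 0 0.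

Definition sdp_feasible {R : numDomainType} {n : nat} (e : rel 'I_n)
    (v : 'cV[R]_n) (M : 'M[R]_n) : Prop :=
  [/\ forall a, M a a = 1,
      forall a b, e a b -> M a b = 0,
      M^T = M &
      psd (block_mx (1%:M : 'M[R]_1) v^T v M)].

Definition sdp_value {R : numDomainType} {n : nat} (J v : 'cV[R]_n) : R :=
  \sum_(a < n) J a ord0 * v a ord0.

Definition sdp_opt {R : realType} {n : nat} (e : rel 'I_n) (J : 'cV[R]_n) : R :=
  inf [set x : R | exists v M, sdp_feasible e v M /\ x = sdp_value J v].

Definition theta_feasible {R : numDomainType} {n : nat} (e : rel 'I_n)
    (B : 'M[R]_n) : Prop :=
  [/\ psd B, \tr B = 1 & forall a b, e a b -> B a b = 0].

Definition lovasz_theta {R : realType} {n : nat} (e : rel 'I_n) : R :=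
  sup [set s : R | exists B, theta_feasible e B /\
                       s = \sum_(a < n) \sum_(b < n) B a b].

From HB Require Import structures.
From mathcomp Require Import all_boot all_order all_algebra all_fingroup.
From mathcomp Require Import classical_sets reals.
From mathcomp Require Import ring lra.
Import Order.TTheory GRing.Theory Num.Theory.
Local Open Scope ring_scope.
Set Implicit Arguments. Unset Strict Implicit.

(* Average a feasible matrix B of the theta program over Aut(G). By vertex
   transitivity the average beta has constant diagonal tr B / n = 1/n and
   constant row sums s / n, where s is the sum of the entries of B; it is still
   PSD and vanishes on edges. The all-ones vector is then an eigenvector of beta
   for s / n, so n beta - (s / n) 11^T is PSD, and by the Schur complement
   v = sqrt (s / n) 1, M = n beta is feasible. Conjugating by a diagonal sign
   matrix turns v into -sqrt (s / n) sign(J), of objective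
   -sqrt (s / n) sum_a |J_a|; the supremum over B yields theta(G). *)

Section QuadraticForm.
Variable R : numDomainType.

Definition qform m (A : 'M[R]_m) (x : 'cV[R]_m) : R := (x^T *m A *m x) 0 0.

Lemma qformE m (A : 'M[R]_m) x :
  qform A x = \sum_i \sum_j x i 0 * A i j * x j 0.
Proof.
rewrite /qform mxE exchange_big /=; apply: eq_bigr => j _.
by rewrite mxE mulr_suml; apply: eq_bigr => i _; rewrite mxE.
Qed.

Lemma qformZ m a (A : 'M[R]_m) x : qform (a *: A) x = a * qform A x.
Proof. by rewrite /qform -scalemxAr -scalemxAl mxE. Qed.

Lemma psd_qform m (A : 'M[R]_m) x : psd A -> 0 <= qform A x.
Proof. by case=> _; apply. Qed.

Lemma psd_sym m (A : 'M[R]_m) i j : psd A -> A i j = A j i.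
Proof. by case=> + _ => {1}<-; rewrite mxE. Qed.

Lemma psd_congruence m p (A : 'M[R]_m) (P : 'M[R]_(m, p)) :
  psd A -> psd (P^T *m A *m P).
Proof.
case=> AT A_ge0; split; first by rewrite !trmx_mul trmxK AT mulmxA.
by move=> x; have := A_ge0 (P *m x); rewrite /qform trmx_mul !mulmxA.
Qed.

Lemma psd0 m : psd (0 : 'M[R]_m).
Proof. by split=> [|x]; rewrite ?trmx0 // /qform mulmx0 mul0mx mxE. Qed.

Lemma psdD m (A B : 'M[R]_m) : psd A -> psd B -> psd (A + B).
Proof.
case=> AT A_ge0 [BT B_ge0]; split=> [|x]; first by rewrite linearD /= AT BT.
by rewrite mulmxDr mulmxDl mxE addr_ge0.
Qed.

Lemma psdZ m a (A : 'M[R]_m) : 0 <= a -> psd A -> psd (a *: A).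
Proof.
move=> a_ge0 [AT A_ge0]; split=> [|x]; first by rewrite linearZ /= AT.
by rewrite -scalemxAr -scalemxAl mxE mulr_ge0.
Qed.

Lemma psd_sum I (r : seq I) (P : pred I) m (A : I -> 'M[R]_m) :
  (forall i, P i -> psd (A i)) -> psd (\sum_(i <- r | P i) A i).
Proof. by move=> A_psd; apply: big_ind => //; [exact: psd0 | exact: psdD]. Qed.

Lemma psd_sum_entries_ge0 m (A : 'M[R]_m) : psd A -> 0 <= \sum_i \sum_j A i j.
Proof.
move/(psd_qform (const_mx 1)); rewrite qformE.
by under eq_bigr do under eq_bigr do rewrite !mxE mul1r mulr1.
Qed.

End QuadraticForm.

Section UnitCornerBlock.
Variables (R : realDomainType) (n : nat) (v : 'cV[R]_n) (M : 'M[R]_n).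

Lemma qform_block x0 (y : 'cV[R]_n) :
  qform (block_mx 1%:M v^T v M) (col_mx x0%:M y) =
  x0 ^+ 2 + 2 * x0 * (\sum_j v j 0 * y j 0) + qform M y.
Proof.
rewrite !qformE.
under eq_bigr do rewrite big_split_ord /= big_ord1.
rewrite big_split_ord /= big_ord1 big_split /=.
rewrite !block_mxEul !col_mxEu !mxE /= mulr1n mulr1 -!addrA.
congr (_ + _); rewrite addrA; congr (_ + _).
- rewrite -big_split mulr_sumr /=; apply: eq_bigr => j _.
  rewrite block_mxEur block_mxEdl !col_mxEd !mxE /=; ring.
- apply: eq_bigr => i _; apply: eq_bigr => j _.
  by rewrite block_mxEdr !col_mxEd.
Qed.

Lemma psd_block_schur : M^T = M ->
  (forall y : 'cV[R]_n, (\sum_j v j 0 * y j 0) ^+ 2 <= qform M y) ->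
  psd (block_mx 1%:M v^T v M).
Proof.
move=> MT vM; split; first by rewrite tr_block_mx trmxK tr_scalar_mx MT.
move=> x; rewrite -[_ 0 0]/(qform _ x) -(vsubmxK x) (mx11_scalar (usubmx x)).
rewrite qform_block.
have := vM (dsubmx x); set w := \sum_j _; set x0 := usubmx x 0 0.
have := sqr_ge0 (x0 + w); nra.
Qed.

Lemma psd_block_entry a : psd (block_mx 1%:M v^T v M) -> M a a = 1 -> `|v a 0| <= 1.
Proof.
set t := v a 0; set y : 'cV[R]_n := - t *: delta_mx a 0.
have y_supp j : j != a -> y j 0 = 0 by move=> ja; rewrite !mxE (negbTE ja) mulr0.
have vy : \sum_j v j 0 * y j 0 = - t ^+ 2.
  rewrite (bigD1 a) //= big1 => [|j ja]; last by rewrite y_supp // mulr0.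
  by rewrite !mxE !eqxx mulr1 addr0 mulrN mulrC.
have My : qform M y = t ^+ 2 * M a a.
  rewrite qformE (bigD1 a) //= [X in _ + X]big1 => [|i ia]; last first.
    by apply: big1 => j _; rewrite y_supp // !mul0r.
  rewrite (bigD1 a) //= big1 => [|j ja]; last by rewrite (y_supp j) // mulr0.
  by rewrite !mxE !eqxx !mulr1 !addr0; ring.
move=> /(psd_qform (col_mx 1%:M y)); rewrite qform_block vy My => H Maa.
rewrite Maa in H.
by rewrite -ler_sqr ?nnegrE // expr1n real_normK ?num_real //; nra.
Qed.

End UnitCornerBlock.

Section AutomorphismGroup.
Variables (n : nat) (e : rel 'I_n).

Definition aut_set : {set {perm 'I_n}} :=
  [set s : {perm 'I_n} | [forall x, [forall y, e (s x) (s y) == e x y]]].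

Lemma aut_setP s : reflect (graph_aut e s) (s \in aut_set).
Proof.
rewrite inE; apply: (iffP forallP) => [es x y | es x].
  by have /forallP/(_ y)/eqP := es x.
by apply/forallP => y; rewrite es.
Qed.

Lemma aut_group_set : group_set aut_set.
Proof.
apply/andP; split; first by apply/aut_setP => x y; rewrite !perm1.
apply/fintype.subsetP => _ /mulsgP[s t /aut_setP es /aut_setP et ->].
by apply/aut_setP => x y; rewrite !permM et es.
Qed.

Definition aut_group := Group aut_group_set.

Lemma vertex_transitive_aut_group : vertex_transitive e ->
  forall x y, exists2 s, s \in aut_group & s x = y.
Proof. by move=> tr x y; have [s [/aut_setP]] := tr x y; exists s. Qed.

End AutomorphismGroup.

Section TransitiveAverage.
Variables (n : nat) (G : {group {perm 'I_n}}).
Hypothesis G_trans : forall x y, exists2 s, s \in G & s x = y.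

Lemma card_perm_fiber a c :
  #|[set s in G | s a == c]| = #|[set s in G | s a == a]|.
Proof.
suff fiber_le x y : (#|[set s in G | s a == x]| <= #|[set s in G | s a == y]|)%N.
  by apply/eqP; rewrite eqn_leq !fiber_le.
have [t Gt txy] := G_trans x y.
rewrite -(card_imset _ (mulIg t)); apply: subset_leq_card.
apply/fintype.subsetP => _ /imsetP[s + ->]; rewrite inE => /andP[Gs /eqP sa].
by rewrite inE groupM //= permM sa txy eqxx.
Qed.

Lemma sum_perm_orbit (R : comPzRingType) (f : 'I_n -> R) a :
  n%:R * \sum_(s in G) f (s a) = #|G|%:R * \sum_c f c.
Proof.
have orbitE (g : 'I_n -> R) :
    \sum_(s in G) g (s a) = (\sum_c g c) *+ #|[set s in G | s a == a]|.
  rewrite (partition_big (fun s : {perm 'I_n} => s a) predT) //= -sumrMnl.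
  apply: eq_bigr => c _; rewrite -(card_perm_fiber a c) -sumr_const.
  rewrite (eq_bigr (fun=> g c)) => [|s /andP[_ /eqP ->] //].
  by apply: eq_bigl => s; rewrite inE.
have := orbitE (fun=> 1); rewrite sumr_const sumr_const card_ord => ->.
by rewrite orbitE mulrnAr [RHS]mulrnAl.
Qed.

End TransitiveAverage.

Section Symmetrization.
Variables (R : numFieldType) (n : nat) (G : {group {perm 'I_n}}).

Definition symmetrize (B : 'M[R]_n) : 'M[R]_n :=
  #|G|%:R^-1 *: \sum_(s in G) row_perm s (col_perm s B).

Lemma symmetrizeE B a b :
  symmetrize B a b = #|G|%:R^-1 * \sum_(s in G) B (s a) (s b).
Proof.
by rewrite mxE summxE; congr (_ * _); apply: eq_bigr => s _; rewrite !mxE.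
Qed.

Lemma psd_symmetrize B : psd B -> psd (symmetrize B).
Proof.
move=> psdB; apply: psdZ; first by rewrite invr_ge0 ler0n.
apply: psd_sum => s _; rewrite row_permE col_permE mulmxA.
have -> : perm_mx s = (perm_mx s^-1)^T :> 'M[R]_n by rewrite tr_perm_mx invgK.
exact: psd_congruence.
Qed.

Lemma symmetrize_edge (e : rel 'I_n) (B : 'M[R]_n) :
  {in G, forall s, graph_aut e s} ->
  (forall a b, e a b -> B a b = 0) -> forall a b, e a b -> symmetrize B a b = 0.
Proof.
move=> autG B0 a b eab; rewrite symmetrizeE big1 ?mulr0 // => s Gs.
by apply: B0; rewrite autG.
Qed.

Hypothesis G_trans : forall x y, exists2 s, s \in G & s x = y.

Let cardG_neq0 : (#|G|%:R : R) != 0.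
Proof. by rewrite pnatr_eq0 -lt0n cardG_gt0. Qed.

Lemma symmetrize_diag B a : n%:R * symmetrize B a a = \tr B.
Proof.
rewrite symmetrizeE mulrCA (sum_perm_orbit G_trans (fun c => B c c)).
by rewrite mulKf.
Qed.

Lemma symmetrize_row B a :
  n%:R * \sum_b symmetrize B a b = \sum_c \sum_b B c b.
Proof.
under eq_bigr do rewrite symmetrizeE.
rewrite -mulr_sumr exchange_big /= mulrCA.
under eq_bigr => s _ do rewrite (reindex_inj (@perm_inj _ s^-1)) /=.
under eq_bigr => s _ do under eq_bigr => b _ do rewrite permKV.
by rewrite (sum_perm_orbit G_trans (fun c => \sum_b B c b)) mulKf.
Qed.

End Symmetrization.

Lemma psd_const_row_sum_qform (R : realFieldType) n (A : 'M[R]_n) rho :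
  psd A -> (forall i, \sum_j A i j = rho) ->
  forall z : 'cV[R]_n, rho * (\sum_i z i 0) ^+ 2 <= n%:R * qform A z.
Proof.
move=> psdA rowA z; set w := \sum_i z i 0; set Q := qform A z.
(* Test positivity on z minus its mean: 1 is an eigenvector of A for rho. *)
have [n0 | n_gt0] := posnP n.
  suff -> : w = 0 by rewrite expr0n mulr0 n0 mul0r.
  by apply: big1 => i _; have := ltn_ord i; rewrite [X in (_ < X)%N]n0.
have n_neq0 : (n%:R : R) != 0 by rewrite pnatr_eq0 -lt0n.
set lam := w / n%:R.
have row_sum : \sum_i \sum_j z i 0 * A i j = rho * w.
  rewrite /w mulr_sumr; apply: eq_bigr => i _.
  by rewrite -mulr_sumr rowA mulrC.
have col_sum : \sum_i \sum_j A i j * z j 0 = rho * w.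
  rewrite exchange_big /w mulr_sumr; apply: eq_bigr => j _.
  rewrite -mulr_suml; congr (_ * _); rewrite -(rowA j).
  by apply: eq_bigr => i _; apply: psd_sym.
have total_sum : \sum_i \sum_j A i j = n%:R * rho.
  by rewrite (eq_bigr (fun=> rho)) ?sumr_const ?card_ord ?mulr_natl.
have := psd_qform (z - const_mx lam) psdA.
have -> : qform A (z - const_mx lam) =
    Q - lam * (\sum_i \sum_j z i 0 * A i j) - lam * (\sum_i \sum_j A i j * z j 0)
    + lam ^+ 2 * (\sum_i \sum_j A i j).
  rewrite /Q !qformE !mulr_sumr -!sumrB -!big_split; apply: eq_bigr => i _.
  rewrite !mulr_sumr -!sumrB -!big_split; apply: eq_bigr => j _ /=.
  by rewrite !mxE; ring.
rewrite row_sum col_sum total_sum => /(mulr_ge0 (ler0n R n)) H.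
rewrite -subr_ge0; congr (_ <= _): H.
by rewrite /lam; field.
Qed.

Lemma sdp_feasible_uniform (R : realFieldType) n (e : rel 'I_n)
    (beta : 'M[R]_n) rho c :
  psd beta -> (forall a, n%:R * beta a a = 1) ->
  (forall a b, e a b -> beta a b = 0) ->
  (forall a, \sum_b beta a b = rho) -> c ^+ 2 <= rho ->
  sdp_feasible e (const_mx c) (n%:R *: beta).
Proof.
move=> psd_beta diag_beta edge_beta row_beta c_rho.
have sym : (n%:R *: beta)^T = n%:R *: beta.
  by rewrite linearZ /=; case: psd_beta => ->.
split=> [a | a b eab | // |]; rewrite ?mxE ?diag_beta ?edge_beta ?mulr0 //.
apply: psd_block_schur => // y.
under eq_bigr do rewrite mxE.
rewrite qformZ -mulr_sumr exprMn.
apply: le_trans (psd_const_row_sum_qform psd_beta row_beta y).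
by rewrite ler_wpM2r ?sqr_ge0.
Qed.

Lemma sdp_feasible_sign_change (R : numDomainType) n (e : rel 'I_n) v M
    (d : 'rV[R]_n) :
  (forall a, d 0 a ^+ 2 = 1) -> sdp_feasible e v M ->
  sdp_feasible e (diag_mx d *m v) (diag_mx d *m M *m diag_mx d).
Proof.
move=> d2 [diagM edgeM symM psdX].
have DMD a b : (diag_mx d *m M *m diag_mx d) a b = d 0 a * M a b * d 0 b.
  by rewrite mul_mx_diag mul_diag_mx !mxE.
split=> [a | a b eab | |].
- by rewrite DMD diagM mulr1 -expr2 d2.
- by rewrite DMD edgeM // mulr0 mul0r.
- by rewrite !trmx_mul tr_diag_mx symM mulmxA.
have := psd_congruence (block_mx 1%:M 0 0 (diag_mx d)) psdX.
rewrite tr_block_mx !trmx0 tr_scalar_mx tr_diag_mx !mulmx_block.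
rewrite !mulmx0 !mul0mx !mul1mx !mulmx1 !addr0 !add0r.
by rewrite trmx_mul tr_diag_mx.
Qed.

Lemma sdp_value_ge (R : realDomainType) n (e : rel 'I_n) (J v : 'cV[R]_n) M :
  sdp_feasible e v M -> - (\sum_a `|J a 0|) <= sdp_value J v.
Proof.
case=> diagM _ _ psdX; rewrite /sdp_value -sumrN; apply: ler_sum => a _.
have : `|J a 0 * v a 0| <= `|J a 0|.
  by rewrite normrM ler_piMr // (psd_block_entry psdX (diagM a)).
by rewrite ler_norml => /andP[].
Qed.

Lemma sdp_opt_le_value (R : realType) n (e : rel 'I_n) (J v : 'cV[R]_n) M :
  sdp_feasible e v M -> sdp_opt e J <= sdp_value J v.
Proof.
move=> F; apply: ge_inf; last by exists v, M.
by exists (- \sum_a `|J a 0|) => _ [w [N [FN ->]]]; exact: sdp_value_ge FN.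
Qed.

Lemma sdp_feasible_trivial (R : realDomainType) n (e : rel 'I_n) :
  irreflexive e -> sdp_feasible e (0 : 'cV[R]_n) 1%:M.
Proof.
move=> irr_e; split=> [a | a b eab | |]; rewrite ?tr_scalar_mx ?mxE ?eqxx //.
  by case: eqP eab => // <-; rewrite irr_e.
apply: psd_block_schur; rewrite ?tr_scalar_mx // => y.
rewrite big1 => [|j _]; last by rewrite mxE mul0r.
rewrite expr0n qformE sumr_ge0 // => i _.
rewrite (bigD1 i) //= big1 => [|j ji]; last first.
  by rewrite mxE eq_sym (negbTE ji) mulr0 mul0r.
by rewrite mxE eqxx mulr1 addr0 -expr2 sqr_ge0.
Qed.

Lemma le_neg_sqrt_sup (R : realType) (T : set R) (x c : R) : 0 <= c -> x <= 0 ->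
  (forall t, T t -> x <= - c * Num.sqrt t) -> x <= - c * Num.sqrt (sup T).
Proof.
move=> c_ge0 x_le0 xT; have [-> | c_gt0] := eqVneq c 0.
  by rewrite oppr0 mul0r.
have {c_ge0} c_gt0 : 0 < c by rewrite lt0r c_gt0.
have [[t Tt] | T0] := boolp.pselect (exists t, T t); last first.
  by rewrite sup_out ?sqrtr0 ?mulr0 // => -[[t Tt] _]; apply: T0; exists t.
have b_ge0 : 0 <= - x / c by rewrite divr_ge0 ?oppr_ge0 // ltW.
have sqrt_le t' : T t' -> Num.sqrt t' <= - x / c.
  by move=> /xT; rewrite mulNr lerNr -ler_pdivlMl // mulrC.
have : sup T <= (- x / c) ^+ 2.
  apply: ge_sup; first by exists t.
  move=> u Tu; have [u_le0 | u_gt0] := lerP u 0.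
    by rewrite (le_trans u_le0) ?sqr_ge0.
  by rewrite -(sqr_sqrtr (ltW u_gt0)) lerXn2r ?nnegrE ?sqrtr_ge0 ?sqrt_le.
move=> /ler_wsqrtr; rewrite sqrtr_sqr ger0_norm // => sup_le.
by rewrite mulNr lerNr -ler_pdivlMl // mulrC.
Qed.

Lemma sdp_opt_le_theta (R : realType) n (e : rel 'I_n) (J : 'cV[R]_n)
    (B : 'M[R]_n) :
  vertex_transitive e -> theta_feasible e B ->
  sdp_opt e J <= - (\sum_a `|J a 0|) * (Num.sqrt n%:R)^-1
                  * Num.sqrt (\sum_a \sum_b B a b).
Proof.
move=> /vertex_transitive_aut_group G_trans [psdB trB edgeB].
set beta := symmetrize (aut_group e) B; set s := \sum_a \sum_b B a b.
have n_gt0 : (0 < n)%N.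
  rewrite lt0n; apply/eqP => n0; move: trB; rewrite /mxtrace big1 => [/eqP|i _].
    by rewrite eq_sym oner_eq0.
  by have := ltn_ord i; rewrite {2}n0.
have n_neq0 : (n%:R : R) != 0 by rewrite pnatr_eq0 -lt0n.
have diag_beta a : n%:R * beta a a = 1 by rewrite symmetrize_diag.
have row_beta a : \sum_b beta a b = s / n%:R.
  by rewrite /s -(symmetrize_row G_trans B a) [n%:R * _]mulrC mulfK.
have edge_beta : forall a b, e a b -> beta a b = 0.
  by apply: symmetrize_edge edgeB => g /aut_setP.
set c := Num.sqrt s / Num.sqrt n%:R.
have c2 : c ^+ 2 <= s / n%:R.
  by rewrite expr_div_n !sqr_sqrtr ?ler0n ?psd_sum_entries_ge0.
have F := sdp_feasible_uniform (psd_symmetrize _ psdB) diag_beta edge_beta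
  row_beta c2.
set d : 'rV[R]_n := \row_a (if J a 0 < 0 then 1 else -1).
have d2 a : d 0 a ^+ 2 = 1 by rewrite mxE; case: ifP; rewrite ?sqrrN expr1n.
have value : sdp_value J (diag_mx d *m const_mx c) = - (\sum_a `|J a 0|) * c.
  rewrite /sdp_value mulNr mulr_suml -sumrN; apply: eq_bigr => a _.
  rewrite mul_diag_mx !mxE; case: ltP => Ja; last by rewrite ger0_norm //; ring.
  by rewrite ltr0_norm //; ring.
have := sdp_opt_le_value J (sdp_feasible_sign_change d2 F).
by rewrite value /c mulrA mulrAC.
Qed.

Unset Implicit Arguments.

Theorem mainTheorem2 (R : realType) (n : nat) (e : rel 'I_n) :
  simple_graph e -> vertex_transitive e ->
  forall J : 'cV[R]_n,
    sdp_opt e J <=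
      - (\sum_(a < n) `|J a ord0|) * (Num.sqrt (n%:R : R))^-1
        * Num.sqrt (lovasz_theta e).
Proof.
move=> [_ irr_e] tr J; rewrite mulNr; apply: le_neg_sqrt_sup.
- by rewrite mulr_ge0 ?sumr_ge0 ?invr_ge0 ?sqrtr_ge0.
- have := sdp_opt_le_value J (sdp_feasible_trivial R irr_e).
  by rewrite /sdp_value big1 // => a _; rewrite mxE mulr0.
- by move=> _ [B [FB ->]]; rewrite -mulNr; exact: sdp_opt_le_theta.
Qed.
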